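(* Let $d$ be an integer and $x$ a real number with $0<d\leqslant x/2$, and let $K_d$ be the largest integer $k$ such that $(k-d)k\leqslant dx$ (i.e. $K_d=\lfloor (d+\sqrt{d^2+4dx})/2\rfloor$). Then for every integer $k$ with $K_d-d<k\leqslant K_d$, $$d\lfloor x/k \rfloor +\frac{x}{\lfloor x/k \rfloor}=2\sqrt{dx}+O\bigl(d^{3/2}x^{-1/2}\bigr),$$ with an absolute implied constant.
   Context: $\lfloor t\rfloor$ denotes the integer part of the real number $t$. *)

From Stdlib Require Export Reals ZArith.
Open Scope R_scope.

(* Integer part (floor) of a real number: the unique integer n with
   n <= t < n + 1.  Stdlib's [up t] is the unique integer with
   t < up t <= t + 1, so [up t - 1] is the floor. *)
Definition floorR (t : R) : Z := (up t - 1)%Z.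

From Stdlib Require Import Reals ZArith Lra Lia Psatz.
Open Scope R_scope.

(* Write s = sqrt (d x) and Q = floor (x / k).  The left-hand side is the
   AM-GM defect (d Q - s)^2 / (d Q).  Maximality of K puts k within d of s,
   so Q k lies within k of x and d Q lies within 5 d of s and above s / 4;
   hence the defect is at most 100 d^2 / s = 100 d^(3/2) x^(-1/2). *)

Lemma floorR_le (t : R) : IZR (floorR t) <= t.
Proof. unfold floorR; rewrite minus_IZR; destruct (archimed t); simpl; lra. Qed.

Lemma floorR_gt (t : R) : t < IZR (floorR t) + 1.
Proof. unfold floorR; rewrite minus_IZR; destruct (archimed t); simpl; lra. Qed.

Lemma floorR_ge1 (t : R) : 1 <= t -> 1 <= IZR (floorR t).
Proof.
  intros Ht; apply IZR_le, Z.lt_pred_le, lt_IZR.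
  pose proof (floorR_gt t); simpl; lra.
Qed.

Lemma amgm_defect (a b q : R) :
  0 < a -> 0 < q -> 0 <= b ->
  a * q + b / q - 2 * sqrt (a * b) = (a * q - sqrt (a * b)) ^ 2 / (a * q).
Proof.
  intros Ha Hq Hb.
  assert (Hs : sqrt (a * b) * sqrt (a * b) = a * b) by (apply sqrt_sqrt; nra).
  replace (b / q) with (sqrt (a * b) * sqrt (a * b) / (a * q))
    by (rewrite Hs; field; lra).
  field; lra.
Qed.

Lemma threshold_le_sqrt_add (D y K : R) :
  0 <= D -> 0 <= y -> (K - D) * K <= y -> K <= sqrt y + D.
Proof.
  intros HD Hy HK.
  pose proof (sqrt_pos y); pose proof (sqrt_sqrt y Hy).
  destruct (Rle_lt_dec K (sqrt y + D)) as [|Hlt]; [lra|].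
  assert (sqrt y * sqrt y < (K - D) * K) by (apply Rmult_le_0_lt_compat; lra).
  lra.
Qed.

Lemma sqrt_lt_threshold_succ (D y K : R) :
  0 <= D -> D <= K -> y < (K + 1 - D) * (K + 1) -> sqrt y < K + 1.
Proof.
  intros HD HDK HK.
  destruct (Rle_lt_dec 0 y) as [Hy|Hy]; [|rewrite sqrt_neg_0; lra].
  pose proof (sqrt_pos y); pose proof (sqrt_sqrt y Hy).
  destruct (Rle_lt_dec (K + 1) (sqrt y)) as [Hle|]; [|lra].
  assert ((K + 1 - D) * (K + 1) <= sqrt y * sqrt y) by (apply Rmult_le_compat; lra).
  lra.
Qed.

Lemma threshold_le (D x K : R) :
  0 < D -> 2 * D <= x -> (K - D) * K <= D * x -> K <= x.
Proof.
  intros HD Hx HK.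
  destruct (Rle_lt_dec K x) as [|Hlt]; [lra|].
  assert (0 < (K - x) * (K + x - D)) by (apply Rmult_lt_0_compat; lra).
  nra.
Qed.

Section ScaledFloor.

Variables D x s k Q : R.
Hypotheses (D_gt0 : 0 < D) (s_gt0 : 0 < s) (s_sqr : s * s = D * x)
  (D_le_s : 4 * D <= 3 * s) (k_gt : s - D < k) (k_le : k <= s + D)
  (Q_le : Q <= x / k) (Q_gt : x / k < Q + 1) (Q_ge1 : 1 <= Q).


Lemma scaled_floor_mul_bounds : s * s - D * k < D * Q * k <= s * s.
Proof.
  assert (Hx : x = x / k * k) by (field; lra).
  rewrite s_sqr; split.
  - assert (x < (Q + 1) * k) by (rewrite Hx; apply Rmult_lt_compat_r; lra).
    nra.
  - assert (Q * k <= x) by (rewrite Hx; apply Rmult_le_compat_r; lra).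
    nra.
Qed.

Lemma scaled_floor_dev : Rabs (D * Q - s) <= 5 * D.
Proof.
  destruct scaled_floor_mul_bounds as [Hlo Hhi].
  apply Rabs_le; split.
  - destruct (Rle_lt_dec (- (5 * D)) (D * Q - s)) as [|Hlt]; [lra|].
    assert ((D * Q - s) * k < - (5 * D) * k) by (apply Rmult_lt_compat_r; lra).
    nra.
  - destruct (Rle_lt_dec (D * Q - s) (5 * D)) as [|Hlt]; [lra|].
    assert (5 * D * k < (D * Q - s) * k) by (apply Rmult_lt_compat_r; lra).
    nra.
Qed.

Lemma scaled_floor_lower : s <= 4 * (D * Q).
Proof.
  destruct scaled_floor_mul_bounds as [Hlo _].
  assert (Hx : x = x / k * k) by (field; lra).
  assert (x < 2 * Q * k) by (rewrite Hx; apply Rmult_lt_compat_r; lra).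
  destruct (Rle_lt_dec s (4 * (D * Q))) as [|Hlt]; [lra|].
  assert (4 * (D * Q) * k < s * k) by (apply Rmult_lt_compat_r; lra).
  nra.
Qed.

End ScaledFloor.

Lemma sqr_sub_div_le (a s e : R) :
  0 < s -> s <= 4 * a -> Rabs (a - s) <= e -> (a - s) ^ 2 / a <= 4 * e ^ 2 / s.
Proof.
  intros Hs Ha He.
  assert (Hsq : (a - s) ^ 2 <= e ^ 2).
  { rewrite <- pow2_abs. pose proof (Rabs_pos (a - s)). nra. }
  apply (Rmult_le_reg_r (a * s)); [nra|].
  replace ((a - s) ^ 2 / a * (a * s)) with ((a - s) ^ 2 * s) by (field; lra).
  replace (4 * e ^ 2 / s * (a * s)) with (e ^ 2 * (4 * a)) by (field; lra).
  pose proof (pow2_ge_0 (a - s)); nra.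
Qed.

Lemma mul_sqrt_div_sqrt (D x : R) :
  0 < D -> 0 < x -> D * sqrt D / sqrt x = D ^ 2 / sqrt (D * x).
Proof.
  intros HD Hx.
  rewrite sqrt_mult by lra.
  pose proof (sqrt_lt_R0 D HD); pose proof (sqrt_lt_R0 x Hx).
  pose proof (sqrt_sqrt D (Rlt_le _ _ HD)).
  replace (D ^ 2) with (D * (sqrt D * sqrt D)) by (rewrite H1; ring).
  field; lra.
Qed.

Lemma threshold_window (d K k : Z) (x : R) :
  (0 < d)%Z -> IZR d <= x / 2 ->
  IZR (K - d) * IZR K <= IZR d * x ->
  (forall k' : Z, IZR (k' - d) * IZR k' <= IZR d * x -> (k' <= K)%Z) ->
  (K - d < k)%Z -> (k <= K)%Z ->
  sqrt (IZR d * x) - IZR d < IZR k <= sqrt (IZR d * x) + IZR d /\ IZR k <= x.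
Proof.
  intros Hd Hdx HK HKmax HkK HkK'.
  assert (Hd0 : 0 < IZR d) by (apply IZR_lt; exact Hd).
  assert (HdK : (d <= K)%Z) by (apply HKmax; rewrite Z.sub_diag, Rmult_0_l; nra).
  assert (HK1 : IZR d * x < IZR (K + 1 - d) * IZR (K + 1)).
  { apply Rnot_le_lt; intros Hle; apply HKmax in Hle; lia. }
  assert (Hkd : IZR (K - d) + 1 <= IZR k) by (rewrite <- plus_IZR; apply IZR_le; lia).
  apply IZR_le in HkK', HdK.
  rewrite minus_IZR in HK, Hkd; rewrite minus_IZR, plus_IZR in HK1.
  pose proof (threshold_le_sqrt_add (IZR d) (IZR d * x) (IZR K)).
  pose proof (sqrt_lt_threshold_succ (IZR d) (IZR d * x) (IZR K)).
  pose proof (threshold_le (IZR d) x (IZR K)).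
  assert (0 <= IZR d * x) by nra.
  repeat split; lra.
Qed.

Theorem proposition5 :
  exists C : R, 0 < C /\
  forall (d : Z) (x : R),
    (0 < d)%Z -> IZR d <= x / 2 ->
    forall K : Z,
      IZR (K - d) * IZR K <= IZR d * x ->
      (forall k' : Z, IZR (k' - d) * IZR k' <= IZR d * x -> (k' <= K)%Z) ->
      forall k : Z, (K - d < k)%Z -> (k <= K)%Z ->
        Rabs (IZR d * IZR (floorR (x / IZR k))
              + x / IZR (floorR (x / IZR k))
              - 2 * sqrt (IZR d * x))
        <= C * (IZR d * sqrt (IZR d) / sqrt x).
Proof.
  exists 100; split; [lra|].
  intros d x Hd Hdx K HK HKmax k HkK HkK'.
  destruct (threshold_window d K k x) as [[Hk_gt Hk_le] Hkx]; try assumption.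
  assert (HD : 0 < IZR d) by (apply IZR_lt; exact Hd).
  set (D := IZR d) in *; set (kr := IZR k) in *.
  set (s := sqrt (D * x)) in *.
  assert (Hs : s * s = D * x) by (apply sqrt_sqrt; nra).
  assert (Hs0 : 0 < s) by (apply sqrt_lt_R0; nra).
  assert (HDs : 4 * D <= 3 * s) by nra.
  pose proof (floorR_le (x / kr)) as HQle; pose proof (floorR_gt (x / kr)) as HQgt.
  set (Q := IZR (floorR (x / kr))) in *.
  assert (HQ1 : 1 <= Q).
  { apply floorR_ge1, (Rmult_le_reg_r kr); [lra|].
    replace (x / kr * kr) with x by (field; lra); lra. }
  assert (Hdev : Rabs (D * Q - s) <= 5 * D)
    by (apply (scaled_floor_dev D x s kr); lra).
  assert (Hlow : s <= 4 * (D * Q))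
    by (apply (scaled_floor_lower D x s kr); lra).
  rewrite mul_sqrt_div_sqrt, amgm_defect by lra; fold s.
  rewrite Rabs_pos_eq
    by (apply Rmult_le_pos; [apply pow2_ge_0 | left; apply Rinv_0_lt_compat; nra]).
  replace (100 * (D ^ 2 / s)) with (4 * (5 * D) ^ 2 / s) by (field; lra).
  apply sqr_sub_div_le; assumption.
Qed.
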